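(* Assume $\mu(\partial A)=0$ for every $\sigma$-invariant probability measure $\mu$. Then for every $v>0$ there exists $M=M(v)$ such that for every $m\ge M$, $$\Phi_{\mathcal{D}_m}(v):=\lim_{n\to\infty}\frac1n\log\mu_\phi\left\{\frac{r_{\mathcal{D}_m}^n}{n}\le v\right\}=-\infty.$$
   Context: $(\Sigma,\sigma)$ is a two-sided mixing subshift of finite type on $\{1,\dots,N\}$, $\phi:\Sigma\to\mathbb{R}$ Hölder continuous with unique equilibrium state $\mu_\phi$. $A\subset\Sigma$ is an open set, $\partial A=\overline A\cap\overline{\Sigma\setminus A}$. An $m$-cylinder is $\{x:x_j=i_j,\ -m\le j\le m\}$; $\mathcal{B}_m$ (resp. $\mathcal{C}_m$) is the largest (resp. smallest) union of $m$-cylinders contained in (resp. containing) $A$; $\mathcal{D}_m=\mathcal{C}_m\setminus\mathcal{B}_m$. For $D\subset\Sigma$, $r_D(x)$ is the smallest integer $n\ge1$ with $\sigma^nx\in D$ ($+\infty$ if none), $r_D^1=r_D$, $r_D^{n+1}=r_D^n+r_D\circ\sigma^{r_D^n}$. The claim includes that the limit exists and equals $-\infty$. *)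

From HB Require Import structures.
From mathcomp Require Import all_boot all_order all_algebra.
From mathcomp Require Import all_classical all_reals all_analysis.

Set Implicit Arguments.
Unset Strict Implicit.
Unset Printing Implicit Defensive.

Import Order.TTheory GRing.Theory Num.Theory numFieldNormedType.Exports.
Local Open Scope classical_set_scope.
Local Open Scope ring_scope.

(* Bi-infinite sequences over the alphabet 'I_N.+1 (= {1,...,N+1} relabelled). *)
Definition seqsp (N : nat) := int -> 'I_N.+1.
HB.instance Definition _ N := gen_eqMixin (seqsp N).
HB.instance Definition _ N := gen_choiceMixin (seqsp N).
HB.instance Definition _ N := isPointed.Build (seqsp N) (fun _ => ord0).

Definition agree N (m : nat) (x y : seqsp N) : Prop :=
  forall j : int, `|j| <= m%:Z -> x j = y j.

(* finite cylinders of the full shift generate the (Borel) sigma-algebra *)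
Definition cyl_gen N : set (set (seqsp N)) :=
  [set C | exists (m : nat) (w : seqsp N), C = [set x | agree m x w]].

Definition X N := g_sigma_algebraType (@cyl_gen N).

Definition shift N (x : X N) : X N := fun i => x (i + 1).

Definition SFT N (L : nat) (W : pred {ffun 'I_L -> 'I_N.+1}) : set (X N) :=
  [set x | forall i : int, W [ffun k : 'I_L => x (i + (k : nat)%:Z)]].

(* topological mixing of the (shift-invariant) set S, in terms of the
   cylinder base of the product topology *)
Definition mixing N (S : set (X N)) : Prop :=
  forall x y, S x -> S y -> forall m : nat, exists K : nat, forall k : nat,
    (K <= k)%N -> exists z, S z /\ agree m z x /\ agree m (iter k (@shift N) z) y.

(* Hoelder continuity on S w.r.t. the metric d(x,y) = 2^{-max{k | x,y agree on [-k,k]}} *)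
Definition holder (R : realType) N (S : set (X N)) (phi : X N -> R) : Prop :=
  exists (C theta : R), 0 < theta < 1 /\
    forall x y, S x -> S y -> forall k : nat, agree k x y ->
      `|phi x - phi y| <= C * theta ^+ k.

Definition cyl N (S : set (X N)) (m : nat) (w : X N) : set (X N) :=
  [set x | S x /\ agree m x w].

Definition open_in N (S A : set (X N)) : Prop :=
  A `<=` S /\ forall x, A x -> exists m, cyl S m x `<=` A.
Definition closure_in N (S A : set (X N)) : set (X N) :=
  [set x | S x /\ forall m, cyl S m x `&` A !=set0].
Definition boundary_in N (S A : set (X N)) : set (X N) :=
  closure_in S A `&` closure_in S (S `\` A).

Definition Bm N (S A : set (X N)) (m : nat) : set (X N) :=
  \bigcup_(C in [set C | range (cyl S m) C /\ C `<=` A]) C.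
Definition Cm N (S A : set (X N)) (m : nat) : set (X N) :=
  \bigcup_(C in [set C | range (cyl S m) C /\ C `&` A !=set0]) C.
Definition Dm N (S A : set (X N)) (m : nat) : set (X N) :=
  Cm S A m `\` Bm S A m.

(* first return time r_D (None = +infinity) *)
Definition ret_time N (D : set (X N)) (x : X N) : option nat :=
  match pselect (exists k, (0 < k)%N && `[< D (iter k (@shift N) x) >]) with
  | left h => Some (ex_minn h)
  | right _ => None
  end.

Fixpoint ret_iter N (D : set (X N)) (n : nat) (x : X N) : option nat :=
  match n with
  | 0 => Some 0%N
  | n'.+1 => match ret_iter D n' x with
             | Some t => omap (addn t) (ret_time D (iter t (@shift N) x))
             | None => None
             end
  end.

Definition ret_le (R : realType) N (D : set (X N)) (n : nat) (v : R) : set (X N) :=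
  [set x | exists t : nat, ret_iter D n x = Some t /\ (t%:R <= v * n%:R)].

Definition shift_invariant (R : realType) N (mu : {measure set (X N) -> \bar R}) : Prop :=
  forall E : set (X N), measurable E -> mu ((@shift N) @^-1` E) = mu E.

Definition is_partition N (k : nat) (P : 'I_k -> set (X N)) : Prop :=
  (forall i, measurable (P i)) /\
  (forall i j, i != j -> P i `&` P j = set0) /\
  (forall x, exists i, P i x).

(* the atom of the join P v sigma^-1 P v ... v sigma^-(n-1) P with itinerary w *)
Definition join_cell N (k n : nat) (P : 'I_k -> set (X N))
  (w : {ffun 'I_n -> 'I_k}) : set (X N) :=
  [set x | forall i : 'I_n, P (w i) (iter i (@shift N) x)].

Definition eta_fun (R : realType) (t : R) : R :=
  if t == 0 then 0 else - (t * ln t).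

Definition H_join (R : realType) N (mu : {measure set (X N) -> \bar R})
  (k : nat) (P : 'I_k -> set (X N)) (n : nat) : R :=
  \sum_(w : {ffun 'I_n -> 'I_k}) eta_fun (fine (mu (join_cell P w))).

Definition entropy_part (R : realType) N (mu : {measure set (X N) -> \bar R})
  (k : nat) (P : 'I_k -> set (X N)) : R :=
  limn (fun n : nat => H_join mu P n / n%:R).

Definition ks_entropy (R : realType) N (mu : {measure set (X N) -> \bar R}) : \bar R :=
  ereal_sup [set e | exists (k : nat) (P : 'I_k -> set (X N)),
    is_partition P /\ e = (entropy_part mu P)%:E].

Definition equilibrium_state (R : realType) N (S : set (X N)) (phi : X N -> R)
  (mu : probability (X N) R) : Prop :=
  shift_invariant mu /\ mu S = 1%E /\
  forall nu : probability (X N) R, shift_invariant nu -> nu S = 1%E ->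
    (ks_entropy nu + \int[nu]_(x in S) (phi x)%:E <=
     ks_entropy mu + \int[mu]_(x in S) (phi x)%:E)%E.

Definition elog (R : realType) (a : \bar R) : \bar R :=
  if a == 0%E then -oo%E else (ln (fine a))%:E.

From Pilot Require Import Defs.
From HB Require Import structures.
From mathcomp Require Import all_boot all_order all_algebra.
From mathcomp Require Import all_classical all_reals all_analysis.
From mathcomp Require Import zify lra.
Import Order.TTheory GRing.Theory Num.Theory numFieldNormedType.Exports.
Local Open Scope classical_set_scope.
Local Open Scope ring_scope.

Set Implicit Arguments.
Unset Strict Implicit.
Unset Printing Implicit Defensive.

(* If the rate is not -oo for arbitrarily deep m, then for
   every k some D_m with m >= k has mu{r^n <= v n} > 0 for some n > k, so some point
   of the SFT returns n times to D_m before time v n + 1, i.e. visits D_m with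
   frequency at least 1/(v+1) along an orbit segment of length T_k > k.  An
   ultrafilter limit of the empirical measures of these segments is a finitely
   additive, shift-invariant content on cylinder sets; compactness of the sequence
   space makes it sigma-additive, and its Caratheodory extension is an invariant
   probability carried by the SFT giving every D_m, hence the boundary of A (their
   intersection), mass at least 1/(v+1). *)
Section Cylinders.
Variable N : nat.
Implicit Types (x y z : X N) (E : set (X N)).

Lemma agree_sym m x y : agree m x y -> agree m y x.
Proof. by move=> h j hj; rewrite h. Qed.

Lemma agree_trans m x y z : agree m x y -> agree m y z -> agree m x z.
Proof. by move=> h1 h2 j hj; rewrite h1 // h2. Qed.

Lemma agree_le m m' x y : (m <= m')%N -> agree m' x y -> agree m x y.
Proof. by move=> mm' h j hj; apply: h; apply: (le_trans hj); rewrite lez_nat. Qed.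

(* the word x_{-j} ... x_j, indexed from 0 *)
Definition window (j : nat) x : {ffun 'I_(j.*2.+1) -> 'I_N.+1} :=
  [ffun i : 'I_(j.*2.+1) => x ((i : nat)%:Z - j%:Z)].

Lemma agree_window j x y : agree j x y <-> window j x = window j y.
Proof.
split=> [h|h k hk].
  apply/ffunP => i; rewrite !ffunE; apply: h.
  have := ltn_ord i; move: (nat_of_ord i) => n; rewrite -addnn => hi.
  rewrite ler_norml; apply/andP; split; lia.
have kj : (absz (k + j%:Z)%R < j.*2.+1)%N by move: hk; rewrite ler_norml -addnn; lia.
have := congr1 (fun w : {ffun _ -> _} => w (Ordinal kj)) h; rewrite !ffunE /=.
by rewrite gez0_abs ?addrK //; move: hk; rewrite ler_norml; lia.
Qed.

Definition determined (j : nat) E := forall x y, agree j x y -> E x -> E y.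

Lemma measurable_determined j E : determined j E -> measurable E.
Proof.
move=> hE; have -> : E = \bigcup_(w in window j @` E) [set y | window j y = w].
  apply/seteqP; split=> [x Ex|y [_ [x Ex <-]] /= e]; first by exists (window j x).
  by apply: (hE x) => //; apply/agree_window.
apply: fin_bigcup_measurable; first exact: finite_finset.
move=> _ [x _ <-]; apply: sub_sigma_algebra; exists j, x.
by apply/seteqP; split => y /agree_window.
Qed.

End Cylinders.

Section ShiftSpace.
Variables (N L : nat) (W : pred {ffun 'I_L -> 'I_N.+1}).
Implicit Types (x y : X N) (E : set (X N)).
Local Notation sh := (@Defs.shift N).
Local Notation S := (SFT W).

Lemma iter_shiftE k x i : iter k sh x i = x (i + k%:Z).
Proof.
by elim: k x i => [|k IH] x i /=; [rewrite addr0|rewrite /Defs.shift IH; congr x; lia].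
Qed.

Lemma SFT_iter k x : S (iter k sh x) <-> S x.
Proof.
split=> h i; [have := h (i - k%:Z)|have := h (i + k%:Z)];
  by congr W; apply/ffunP => l; rewrite !ffunE iter_shiftE; congr x; lia.
Qed.

Lemma determined_iter j k E :
  determined j E -> determined (j + k) (fun x => E (iter k sh x)).
Proof. by move=> hE x y a; apply: hE => i hi; rewrite !iter_shiftE; apply: a; lia. Qed.

Definition SFT_window (n : nat) : set (X N) :=
  [set x | forall i : int, `|i| <= n%:Z -> W [ffun k : 'I_L => x (i + (k : nat)%:Z)]].

Lemma determined_SFT_window n : determined (n + L) (SFT_window n).
Proof.
move=> x y a h i hi; have := h i hi; congr W; apply/ffunP => k; rewrite !ffunE.
by apply: a; have := ltn_ord k; move: (nat_of_ord k) => l hl; lia.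
Qed.

Lemma SFT_window_nonincreasing : nonincreasing_seq SFT_window.
Proof. by move=> n m nm; apply/subsetPset => x h i hi; apply: h; lia. Qed.

Lemma SFT_bigcap_window : S = \bigcap_n SFT_window n.
Proof.
apply/seteqP; split=> [x h n _ i _|x h i]; first exact: h.
by apply: (h (absz i)) => //; lia.
Qed.

Lemma measurable_SFT : measurable S.
Proof.
rewrite SFT_bigcap_window; apply: bigcapT_measurable => n.
exact (measurable_determined (@determined_SFT_window n)).
Qed.

Lemma cyl_agree m x w : agree m x w -> cyl S m x = cyl S m w.
Proof.
move=> a; apply/seteqP; split=> y [Sy ay]; split=> //.
  exact: agree_trans ay a.
exact: agree_trans ay (agree_sym a).
Qed.

Variable A : set (X N).

Lemma DmP m x : Dm S A m x <->
  [/\ S x, cyl S m x `&` A !=set0 & ~ (cyl S m x `<=` A)].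
Proof.
split=> [[[C [[w _ <-] CA] [Sx axw]] nB]|[Sx CA nsub]].
  rewrite (cyl_agree axw); split=> // sub; apply: nB.
  by exists (cyl S m w) => //; split=> //; exists w.
split; first by exists (cyl S m x); [split=> //; exists x|split].
by case=> C [[w _ <-] sub] [_ axw]; apply: nsub; rewrite (cyl_agree axw).
Qed.

Lemma Dm_nonincreasing : nonincreasing_seq (Dm S A).
Proof.
move=> m m' mm'; apply/subsetPset => x /DmP [Sx [y [[Sy ay] Ay]] nsub].
apply/DmP; split=> //; first by exists y; split=> //; split=> //; exact: agree_le ay.
by move=> sub; apply: nsub => z [Sz az]; apply: sub; split=> //; exact: agree_le az.
Qed.

Lemma boundary_bigcap_Dm : boundary_in S A = \bigcap_m Dm S A m.
Proof.
apply/seteqP; split=> [x [[Sx cA] [_ cnA]] m _|x h].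
  apply/DmP; split=> // sub.
  by have [y [yc [_ nAy]]] := cnA m; exact: nAy (sub _ yc).
have [Sx _ _] := (DmP _ _).1 (h 0%N I).
split; split=> // m; have [_ hA hnA] := (DmP _ _).1 (h m I) => //.
apply: contrapT => hn; apply: hnA => y yc; apply: contrapT => nAy; apply: hn.
by exists y; split=> //; split=> //; case: yc.
Qed.

Definition Dm_hull (m : nat) : set (X N) :=
  [set y | exists x, Dm S A m x /\ agree m y x].

Lemma determined_Dm_hull m : determined m (Dm_hull m).
Proof.
by move=> y z a [x [Dx ax]]; exists x; split=> //; exact: agree_trans (agree_sym a) ax.
Qed.

Lemma Dm_SFT_hull m : Dm S A m = S `&` Dm_hull m.
Proof.
apply/seteqP; split=> [x Dx|y [Sy [x [/DmP [Sx h1 h2] ayx]]]].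
  by split; [case/DmP: Dx|exists x].
by apply/DmP; rewrite (cyl_agree ayx).
Qed.

Lemma Dm_hull_nonincreasing : nonincreasing_seq Dm_hull.
Proof.
move=> m m' mm'; apply/subsetPset => y [x [Dx a]]; exists x; split.
  by move: Dx; apply/subsetPset/Dm_nonincreasing.
exact: agree_le a.
Qed.

Lemma boundary_SFT_hull : boundary_in S A = S `&` \bigcap_m Dm_hull m.
Proof.
rewrite boundary_bigcap_Dm -bigcapIr; last by exists 0%N.
by congr bigcap; apply/funext => m; rewrite Dm_SFT_hull.
Qed.

Lemma measurable_Dm_iter m k : measurable [set x | Dm S A m (iter k sh x)].
Proof.
have -> : [set x | Dm S A m (iter k sh x)] = S `&` [set x | Dm_hull m (iter k sh x)].
  by apply/seteqP; split=> x /=; rewrite Dm_SFT_hull => -[/SFT_iter].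
apply: measurableI; first exact: measurable_SFT.
exact (measurable_determined (determined_iter (k:=k) (@determined_Dm_hull m))).
Qed.

End ShiftSpace.

Section ReturnTimes.
Variables (N : nat) (D : set (X N)).
Local Notation sh := (@Defs.shift N).
Implicit Types x y : X N.

Lemma ret_timeP y r : ret_time D y = Some r <->
  [/\ (0 < r)%N, D (iter r sh y) & forall k, (0 < k < r)%N -> ~ D (iter k sh y)].
Proof.
rewrite /ret_time; case: pselect => [h|h]; last first.
  split=> // -[rpos Dr _]; exfalso; apply: h; exists r.
  by rewrite rpos; exact: asboolT.
case: ex_minnP => r0 /andP[r0pos /asboolP Dr] minr; split.
  case=> <-; split=> // k /andP[k0 kr] Dk.
  by have := minr k; rewrite k0 (asboolT Dk) leqNgt kr => /(_ isT).
case=> rpos Dyr hmin; congr Some; apply/eqP; rewrite eqn_leq.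
rewrite minr ?rpos ?(asboolT Dyr) //= leqNgt; apply/negP => lt.
by apply: (hmin r0) => //; rewrite r0pos lt.
Qed.

Definition visits x (T : nat) : nat :=
  (\sum_(0 <= k < T) (`[< D (iter k sh x) >] : nat))%N.

Lemma visits_le x T : (visits x T <= T)%N.
Proof.
rewrite /visits -[X in (_ <= X)%N](card_ord T) -sum1_card big_mkord.
by apply: leq_sum => i _; case: asboolP.
Qed.

Lemma visits_mono x : {homo visits x : T T' / (T <= T')%N}.
Proof.
move=> T T' le; rewrite /visits (big_cat_nat (leq0n T) le) /=; exact: leq_addr.
Qed.

Lemma ret_iter_visits n x t : ret_iter D n x = Some t -> (n <= visits x t.+1)%N.
Proof.
elim: n t => [|n IH] t //=.
case e : (ret_iter D n x) => [t0|//].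
case e2 : (ret_time D (iter t0 sh x)) => [r|//] /= [<-].
move/ret_timeP: e2 => [r0 Dr _]; rewrite -iterD addnC in Dr.
rewrite /visits big_nat_recr //= -/(visits x (t0 + r)) (asboolT Dr) addn1 ltnS.
by apply: leq_trans (IH _ e) _; apply: visits_mono; lia.
Qed.

Hypothesis measurable_D_iter : forall k, measurable [set x | D (iter k sh x)].

Lemma measurable_ret_time s r : measurable [set x | ret_time D (iter s sh x) = Some r].
Proof.
case: r => [|r].
  by rewrite (_ : [set x | _] = set0) //; apply/seteqP; split=> // x /ret_timeP [].
have -> : [set x | ret_time D (iter s sh x) = Some r.+1] =
    [set x | D (iter (r.+1 + s) sh x)] `&`
    ~` \bigcup_(k in [set k | (0 < k < r.+1)%N]) [set x | D (iter (k + s) sh x)].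
  apply/seteqP; split=> x /=.
    move/ret_timeP => [_ Dr hmin]; split; first by rewrite iterD.
    by case=> k /= kr; rewrite iterD; exact: hmin.
  case=> Dr nU; apply/ret_timeP; split=> //; first by rewrite -iterD.
  by move=> k kr Dk; apply: nU; exists k => //; rewrite /= iterD.
by apply: measurableI => //; apply: measurableC; apply: bigcup_measurable.
Qed.

Lemma measurable_ret_iter n t : measurable [set x | ret_iter D n x = Some t].
Proof.
elim: n t => [|n IH] t /=.
  case: (eqVneq t 0%N) => [->|tn].
    by rewrite (_ : [set _ | _] = setT) //; apply/seteqP.
  rewrite (_ : [set _ | _] = set0) //; apply/seteqP; split=> // x [/esym/eqP].
  by rewrite (negbTE tn).
rewrite (_ : [set x | _] = \bigcup_(t0 in [set t0 | (t0 <= t)%N])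
     ([set x | ret_iter D n x = Some t0] `&`
      [set x | ret_time D (iter t0 sh x) = Some (t - t0)%N])).
  apply: bigcup_measurable => t0 _; apply: measurableI; first exact: IH.
  exact: measurable_ret_time.
apply/seteqP; split=> x /=.
  case e : (ret_iter D n x) => [t0|//].
  case e2 : (ret_time D (iter t0 sh x)) => [r|//] /= [<-].
  by exists t0; [rewrite /= leq_addr|split=> //; rewrite addKn].
by move=> [t0 /= t0t [e e2]]; rewrite e e2 /=; congr Some; lia.
Qed.

Lemma measurable_ret_le (R : realType) n (v : R) : measurable (ret_le D n v).
Proof.
rewrite (_ : ret_le D n v = \bigcup_(t in [set t : nat | t%:R <= v * n%:R])
                             [set x | ret_iter D n x = Some t]).
  by apply: bigcup_measurable => t _; exact: measurable_ret_iter.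
by apply/seteqP; split=> x [t] /=; [case=> e le; exists t|exists t].
Qed.

End ReturnTimes.

Section Compactness.
Variables (N : nat) (K : nat -> set (X N)).
Hypothesis K_determined : forall n, exists j, determined j (K n).
Hypothesis K_nonincreasing : nonincreasing_seq K.
Implicit Types (x y w : X N) (P : set (X N)).

(* pigeonhole over the finitely many words of length 2j+1 *)
Lemma meets_window P j : (forall n, K n `&` P !=set0) ->
  exists p, forall n, K n `&` P `&` [set y | window j y = p] !=set0.
Proof.
move=> hP; apply: contrapT => /forallNP /(_ _) /existsNP hp.
have [f hf] := choice hp; have [y [Ky Py]] := hP (\max_p f p)%N.
apply: (hf (window j y)); exists y; split=> //; split=> //.
by move: Ky; apply/subsetPset/K_nonincreasing; exact: leq_bigmax.
Qed.

Lemma refine_center P j : (forall n, K n `&` P !=set0) ->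
  exists2 w, P w & forall n, K n `&` P `&` [set y | agree j y w] !=set0.
Proof.
move=> hP; have [p hp] := meets_window j hP; have [w [[_ Pw] ew]] := hp 0%N.
exists w => // n; have [y [KPy ey]] := hp n.
by exists y; split=> //; apply/agree_window; rewrite ey ew.
Qed.

Hypothesis K_nonempty : forall n, K n !=set0.

Lemma cylinder_compactness : exists x, forall n, K n x.
Proof.
pose G j w := forall n, K n `&` [set y | agree j y w] !=set0.
have step j w : exists w', G j w -> agree j w' w /\ G j.+1 w'.
  have [Gw|] := pselect (G j w); last by exists w.
  have [w' aw' hw'] := refine_center j.+1 Gw; exists w' => _; split=> // n.
  by have [y [[Ky _] ay]] := hw' n; exists y.
have [F hF] := choice (fun jw : nat * X N => step jw.1 jw.2).
have [w0 _ hw0] := @refine_center setT 0%N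
  (fun n => let: exist y Ky := cid (K_nonempty n) in ex_intro _ y (conj Ky I)).
pose fix c (j : nat) : X N := if j is j'.+1 then F (j', c j') else w0.
have Gc j : G j (c j) /\ agree j (c j.+1) (c j).
  have G0 : G 0%N w0 by move=> n; have [y [[Ky _] ay]] := hw0 n; exists y.
  elim: j => [|j [IH _]]; first by split=> //; exact: (hF (0%N, w0) G0).1.
  have [_ G1] := hF (j, c j) IH; split=> //; exact: (hF (j.+1, c j.+1) G1).1.
have c_agree j k : (j <= k)%N -> agree j (c k) (c j).
  move=> /subnK <-; elim: (k - j)%N => [|d IH] //=.
  by apply: agree_trans _ IH; apply: agree_le (Gc _).2; rewrite leq_addl.
pose x : X N := fun i => c (absz i) i.
have ax j : agree j x (c j).
  by move=> i hi; rewrite /x (c_agree (absz i) j) //; lia.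
exists x => n; have [j hj] := K_determined n; have [y [Ky ay]] := (Gc j).1 n.
by apply: (hj y) => //; exact: agree_trans ay (agree_sym (ax j)).
Qed.

End Compactness.

Section CylinderAlgebra.
Variable N : nat.
Implicit Types E F : set (X N).

Definition cylinder_set E := exists j, determined j E.

Lemma cylinder_set0 : cylinder_set set0. Proof. by exists 0%N. Qed.

Lemma cylinder_setC E : cylinder_set E -> cylinder_set (~` E).
Proof.
by move=> [j h]; exists j => x y a nEx Ey; apply: nEx; exact: h (agree_sym a) Ey.
Qed.

Lemma cylinder_setU E F : cylinder_set E -> cylinder_set F -> cylinder_set (E `|` F).
Proof.
move=> [j hE] [k hF]; exists (maxn j k) => x y a [Ex|Fx].
  by left; apply: (hE x) => //; apply: agree_le a; exact: leq_maxl.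
by right; apply: (hF x) => //; apply: agree_le a; exact: leq_maxr.
Qed.

Lemma cylinder_setI E F : cylinder_set E -> cylinder_set F -> cylinder_set (E `&` F).
Proof.
move=> cE cF; rewrite -[E]setCK -[F]setCK -setCU.
by apply/cylinder_setC/cylinder_setU; apply: cylinder_setC.
Qed.

Lemma cylinder_setT : cylinder_set setT.
Proof. by rewrite -setC0; exact/cylinder_setC/cylinder_set0. Qed.

Lemma cyl_gen_cylinder_set : @cyl_gen N `<=` cylinder_set.
Proof. by move=> _ [m [w ->]]; exists m => a b ab ha; exact: agree_trans (agree_sym ab) ha. Qed.

Lemma cylinder_set_bigsetU (F : nat -> set (X N)) n : (forall i, cylinder_set (F i)) ->
  cylinder_set (\big[setU/set0]_(i < n) F i).
Proof. by move=> h; elim/big_ind: _ => //; [exact: cylinder_set0|exact: cylinder_setU]. Qed.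

(* compactness of the sequence space, in the form needed for sigma-additivity *)
Lemma cylinder_set_partition_finite (F : nat -> set (X N)) :
  (forall i, cylinder_set (F i)) -> trivIset setT F -> cylinder_set (\bigcup_i F i) ->
  exists n, forall i, (n <= i)%N -> F i = set0.
Proof.
move=> cF tF cU; apply: contrapT => hn.
pose K n := \bigcup_i F i `\` \big[setU/set0]_(i < n) F i.
have Kc n : cylinder_set (K n).
  by rewrite /K setDE; apply: cylinder_setI => //; apply/cylinder_setC/cylinder_set_bigsetU.
have Kdec : nonincreasing_seq K.
  move=> n n' le; apply/subsetPset => x [Ux nx]; split=> //.
  rewrite -bigcup_mkord => -[i iln Fi]; apply: nx; rewrite -bigcup_mkord.
  by exists i => //=; exact: leq_trans iln le.
have Kne n : K n !=set0.
  apply: contrapT => hK; apply: hn; exists n => i ni.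
  apply/seteqP; split=> // x Fx; apply: hK; exists x; split; first by exists i.
  rewrite -bigcup_mkord => -[k kn Fk].
  have := (trivIsetP.1 tF) k i I I; rewrite neq_ltn (leq_trans kn ni) => /(_ isT).
  by move/seteqP => [+ _] => /(_ x (conj Fk Fx)).
have [x hx] := cylinder_compactness Kc Kdec Kne.
have [[i _ Fi] _] := hx 0%N; have [_] := hx i.+1; apply.
by rewrite -bigcup_mkord; exists i => /=.
Qed.

End CylinderAlgebra.

Section UltraLimit.
Variables (R : realType) (U : set_system nat).
Hypotheses (U_ultra : UltraFilter U) (U_cofinite : \oo `<=` U).
Variables (lo hi : R).
Implicit Types a b : nat -> R.

Definition bounded_by a := forall n, lo <= a n <= hi.

(* ultrafilter limits of bounded sequences exist by compactness of [lo, hi] *)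
Lemma ultra_cvg a : bounded_by a -> a @ U --> lim (a @ U).
Proof.
move=> ha; apply/cvg_ex.
have Fc : (a @ U) `[lo, hi]%classic.
  have UF : Filter U by apply: ultra_proper.
  rewrite /fmap /=; apply: (@filterS _ U UF setT); last exact: filterT.
  by move=> n _ /=; rewrite in_itv /=; exact: ha.
have [p [_ cp]] := @segment_compact R lo hi (a @ U) _ Fc.
exists p => B Bp; case: (in_ultra_setVsetC (a @^-1` B) U_ultra) => // hc.
by have [z [/= nBz Bz]] := cp (~` B) B hc Bp.
Qed.

Lemma ultra_limD a b : bounded_by a -> bounded_by b ->
  lim ((a \+ b) @ U) = lim (a @ U) + lim (b @ U).
Proof. by move=> ha hb; apply: cvg_lim => //; apply: cvgD; exact: ultra_cvg. Qed.

Lemma ultra_lim_ge a c : bounded_by a -> (\forall n \near \oo, c <= a n) ->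
  c <= lim (a @ U).
Proof.
move=> ha hc; apply: (@closed_cvg _ _ U _ a [set x | c <= x]) (ultra_cvg ha).
  exact: closed_ge.
exact: U_cofinite.
Qed.

Lemma ultra_lim_eq a b : bounded_by b -> (a - b) @ \oo --> 0 ->
  lim (a @ U) = lim (b @ U).
Proof.
move=> hb ab; have -> : a = (a - b) \+ b by apply/funext => n; rewrite /= subrK.
apply: cvg_lim => //; rewrite -[lim (b @ U)]add0r; apply: cvgD; last exact: ultra_cvg.
exact: cvg_trans (cvg_app _ U_cofinite) ab.
Qed.

End UltraLimit.

Section Visits.
Variable N : nat.
Local Notation sh := (@Defs.shift N).
Implicit Types (x : X N) (E F : set (X N)).

Lemma visits_subset E F x t : E `<=` F -> (visits E x t <= visits F x t)%N.
Proof. by move=> EF; apply: leq_sum => i _; case: asboolP => // /EF /asboolT ->. Qed.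

Lemma visits_setU E F x t : E `&` F = set0 ->
  visits (E `|` F) x t = (visits E x t + visits F x t)%N.
Proof.
move=> EF; rewrite /visits -big_split /=; apply: eq_bigr => i _.
rewrite asbool_or; case: asboolP => hE; case: asboolP => hF //=.
by move: EF => /seteqP [/(_ _ (conj hE hF))].
Qed.

Lemma visits_all E x t : (forall k, (k < t)%N -> E (iter k sh x)) -> visits E x t = t.
Proof.
move=> h; rewrite /visits (eq_big_nat _ _ (F2 := fun _ => 1%N)).
  by rewrite sum_nat_const_nat muln1 subn0.
by move=> k /andP[_ kt]; rewrite asboolT //; exact: h.
Qed.

Lemma visits_preimage_shift E x t :
  (visits (sh @^-1` E) x t + `[< E x >] = visits E x t + `[< E (iter t sh x) >])%N.
Proof.
rewrite /visits; elim: t => [|t IH]; first by rewrite !big_geq.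
rewrite !big_nat_recr //= -!addnA (addnC `[< E (sh _) >]) addnA IH -addnA.
by congr (_ + _)%N; rewrite addnC.
Qed.

Lemma visits_preimage_shift_dist (R : realType) E x t :
  `|(visits (sh @^-1` E) x t)%:R - (visits E x t)%:R| <= 1 :> R.
Proof.
have := visits_preimage_shift E x t.
set a := visits _ _ _; set b := visits _ _ _ => h.
have ab : a%:R <= b%:R + 1 :> R by rewrite natr1 ler_nat; move: h; do 2 case: asboolP; lia.
have ba : b%:R <= a%:R + 1 :> R by rewrite natr1 ler_nat; move: h; do 2 case: asboolP; lia.
by rewrite ler_norml; apply/andP; split; lra.
Qed.

End Visits.

Section EmpiricalMeasure.
Variables (R : realType) (N : nat) (U : set_system nat).
Hypotheses (U_ultra : UltraFilter U) (U_cofinite : \oo `<=` U).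
Variables (y : nat -> X N) (T : nat -> nat).
Hypothesis T_gt : forall k, (k < T k)%N.
Local Notation sh := (@Defs.shift N).
Implicit Types E F : set (X N).

Lemma T_gt0 k : (0 < T k)%N. Proof. exact: leq_ltn_trans (T_gt k). Qed.

Definition freq E k : R := (visits E (y k) (T k))%:R / (T k)%:R.

Lemma freq_bounded E : bounded_by 0 1 (freq E).
Proof.
move=> k; rewrite /freq divr_ge0 //= ler_pdivrMr ?ltr0n ?T_gt0 // mul1r ler_nat.
exact: visits_le.
Qed.

(* a shift-invariant, finitely additive limit of the empirical measures *)
Definition lam E : R := lim (freq E @ U).

Lemma lam_ge E c : (\forall k \near \oo, c <= freq E k) -> c <= lam E.
Proof. exact/ultra_lim_ge/freq_bounded. Qed.

Lemma lam_ge0 E : 0 <= lam E.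
Proof. by apply: lam_ge; apply: nearW => k; case/andP: (freq_bounded E k). Qed.

Lemma lam_all E : (forall k i, (i < T k)%N -> E (iter i sh (y k))) -> lam E = 1.
Proof.
move=> h; rewrite /lam (_ : freq E = fun=> 1); first exact: lim_cst.
apply/funext => k; rewrite /freq visits_all; last exact: h.
by rewrite divff // pnatr_eq0 -lt0n T_gt0.
Qed.

Lemma lamU E F : E `&` F = set0 -> lam (E `|` F) = lam E + lam F.
Proof.
move=> EF; rewrite /lam -(ultra_limD _ (freq_bounded E) (freq_bounded F)).
suff -> : freq (E `|` F) = freq E \+ freq F by [].
by apply/funext => k; rewrite /freq /= visits_setU // natrD mulrDl.
Qed.

Lemma lam0 : lam set0 = 0.
Proof. by have := lamU (setI0 set0); rewrite setU0 => h; lra. Qed.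

Lemma lam_preimage_shift E : lam (sh @^-1` E) = lam E.
Proof.
apply: (ultra_lim_eq U_ultra U_cofinite (freq_bounded E)).
apply: (@squeeze_cvgr _ _ _ _ (- harmonic) harmonic); last first.
- exact: cvg_harmonic.
- by rewrite -oppr0; apply: cvgN; exact: cvg_harmonic.
apply: nearW => k; rewrite -ler_norml /freq -mulrBl normrM.
rewrite [X in _ * X]ger0_norm ?invr_ge0 // /harmonic /=.
rewrite -[X in _ <= X]mul1r ler_pM ?invr_ge0 //; first exact: visits_preimage_shift_dist.
by rewrite lef_pV2 ?posrE ?ltr0n ?T_gt0 // ler_nat T_gt.
Qed.

End EmpiricalMeasure.

Section ProbabilityFacts.
Context d (T : measurableType d) (R : realType) (P : probability T R).

Lemma probability_setI_full S B : measurable S -> measurable B -> P S = 1%E ->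
  P (S `&` B) = P B.
Proof.
move=> mS mB PS.
rewrite [RHS](measureDI P mB mS) setIC [X in (X + _)%E](_ : _ = 0%E) ?add0e //.
apply/eqP; rewrite eq_le measure_ge0 andbT.
have <- : P (~` S) = 0%E by rewrite probability_setC // PS subee.
by apply: le_measure; rewrite ?inE; [exact: measurableD|exact: measurableC|move=> x []].
Qed.

Lemma probability_bigcap_ge (F : nat -> set T) (c : R) :
  (forall n, measurable (F n)) -> nonincreasing_seq F ->
  (forall n, c%:E <= P (F n))%E -> (c%:E <= P (\bigcap_n F n))%E.
Proof.
move=> mF decF cF; have mI : measurable (\bigcap_n F n) by exact: bigcapT_measurable.
have P0 : (P (F 0%N) < +oo)%E.
  by apply: le_lt_trans (probability_le1 P (mF 0%N)) _; rewrite ltry.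
have PF := nonincreasing_cvg_mu P0 mF mI decF.
rewrite -(cvg_lim (@ereal_hausdorff R) PF); apply: lime_ge; last exact: nearW.
by apply/cvg_ex; eexists; exact: PF.
Qed.

End ProbabilityFacts.

(* a copy of the sequence space carrying the algebra of cylinder sets, on which
   [lam] is a measure to be extended by Caratheodory's theorem *)
Definition cyl_space (N : nat) : Type := seqsp N.
HB.instance Definition _ N := Pointed.copy (cyl_space N) (seqsp N).

HB.instance Definition _ N := @isAlgebraOfSets.Build default_measure_display
  (cyl_space N) (@cylinder_set N) (@cylinder_set0 N)
  (@cylinder_setU N) (@cylinder_setC N).

Lemma measurable_cylinder_set N : <<s @cylinder_set N >> = @measurable _ (X N).
Proof.
apply/seteqP; split; apply: smallest_sub.
- exact: sigma_algebra_measurable.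
- by move=> E [j h]; exact (measurable_determined h).
- exact: smallest_sigma_algebra.
- by move=> E /cyl_gen_cylinder_set; exact: sub_sigma_algebra.
Qed.

Section LimitMeasure.
Variables (R : realType) (N : nat) (U : set_system nat).
Hypotheses (U_ultra : UltraFilter U) (U_cofinite : \oo `<=` U).
Variables (y : nat -> X N) (T : nat -> nat).
Hypothesis T_gt : forall k, (k < T k)%N.
Local Notation sh := (@Defs.shift N).
Local Notation lam := (@lam R N U y T).

Definition lam_content (E : set (cyl_space N)) : \bar R := (lam E)%:E.

Lemma lam_content0 : lam_content set0 = 0%E.
Proof. by rewrite /lam_content lam0. Qed.

Lemma lam_content_ge0 E : (0 <= lam_content E)%E.
Proof. by rewrite lee_fin lam_ge0. Qed.

Lemma lam_bigsetU (F : nat -> set (X N)) n : trivIset setT F ->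
  lam (\big[setU/set0]_(i < n) F i) = \sum_(i < n) lam (F i).
Proof.
move=> tF; elim: n => [|n IH]; first by rewrite !big_ord0 lam0.
rewrite !big_ord_recr /= lamU // ?IH //.
rewrite -bigcup_mkord setI_bigcupl; apply/seteqP; split=> // x [i /= ilt [Fi Fn]].
have := (trivIsetP.1 tF) i n I I; rewrite neq_ltn ilt => /(_ isT).
by move/seteqP => [+ _] => /(_ x (conj Fi Fn)).
Qed.

Lemma lam_content_sigma_additive : semi_sigma_additive lam_content.
Proof.
move=> F mF tF mUF; have [n0 hn0] := cylinder_set_partition_finite mF tF mUF.
apply: cvg_near_cst; near=> n.
rewrite big_mkord /lam_content sumEFin -lam_bigsetU //; congr (lam _)%:E.
apply/seteqP; split; rewrite -bigcup_mkord => x [i /= ilt Fi]; first by exists i.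
exists i => //=; rewrite ltnNge; apply/negP => ni.
have : (n0 <= i)%N by apply: leq_trans ni; near: n; exact: nbhs_infty_ge.
by move/hn0 => e; rewrite e in Fi.
Unshelve. all: by end_near. Qed.

HB.instance Definition _ := isMeasure.Build _ (cyl_space N) R lam_content
  lam_content0 lam_content_ge0 lam_content_sigma_additive.

Definition lim_measure (E : set (X N)) : \bar R := measure_extension lam_content E.

Lemma lim_measure_sigma_additive : semi_sigma_additive lim_measure.
Proof.
move=> F mF tF mUF; have cyl_meas E : measurable E -> <<s @cylinder_set N >> E.
  by rewrite measurable_cylinder_set.
exact: (measure_semi_sigma_additive (s := measure_extension lam_content) F
  (fun i => cyl_meas _ (mF i)) tF (cyl_meas _ mUF)).
Qed.

HB.instance Definition _ := isMeasure.Build _ (X N) R lim_measure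
  (measure0 (measure_extension lam_content)) (measure_ge0 (measure_extension lam_content))
  lim_measure_sigma_additive.

Lemma lim_measureE E : cylinder_set E -> lim_measure E = (lam E)%:E.
Proof. by move=> cE; rewrite /lim_measure /measure_extension measurable_mu_extE. Qed.

Lemma lim_measureT : lim_measure setT = 1%E.
Proof.
rewrite lim_measureE; last exact: cylinder_setT.
by rewrite (lam_all R U_ultra T_gt).
Qed.

HB.instance Definition _ := Measure_isProbability.Build _ (X N) R lim_measure lim_measureT.

End LimitMeasure.

Section ShiftMeasurable.
Variable N : nat.
Local Notation sh := (@Defs.shift N).

Lemma cylinder_set_preimage_shift (E : set (X N)) :
  cylinder_set E -> cylinder_set (sh @^-1` E).
Proof. by move=> [j h]; exists (j + 1)%N; exact: (determined_iter (k := 1%N) h). Qed.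

Lemma measurable_shift : measurable_fun [set: X N] sh.
Proof.
apply: (@measurability _ _ (X N) (X N) setT sh (@cyl_gen N)) => //.
move=> _ [B /cyl_gen_cylinder_set cB <-]; rewrite setTI -measurable_cylinder_set.
by apply: sub_sigma_algebra; exact: cylinder_set_preimage_shift.
Qed.

End ShiftMeasurable.

Section LimitMeasureProperties.
Variables (R : realType) (N : nat) (U : set_system nat).
Hypotheses (U_ultra : UltraFilter U) (U_cofinite : \oo `<=` U).
Variables (y : nat -> X N) (T : nat -> nat).
Hypothesis T_gt : forall k, (k < T k)%N.
Local Notation sh := (@Defs.shift N).
Local Notation nu := (@lim_measure R N U U_ultra U_cofinite y T T_gt).

Lemma lim_measure_invariant : shift_invariant nu.
Proof.
move=> E mE; have msh := @measurable_shift N; symmetry.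
apply: (measure_unique (@cylinder_set N) (fun=> setT) (esym (@measurable_cylinder_set N))
  _ _ _ _ (pushforward nu sh)) => //.
- by move=> ? ?; exact: cylinder_setI.
- by move=> _; exact: cylinder_setT.
- by rewrite bigcup_const.
- move=> B cB; change (nu B = nu (sh @^-1` B)).
  rewrite !lim_measureE //; last exact: cylinder_set_preimage_shift.
  by rewrite lam_preimage_shift.
- by move=> _; change (nu setT < +oo)%E; rewrite lim_measureT ltry.
Qed.

Variables (L : nat) (W : pred {ffun 'I_L -> 'I_N.+1}).
Hypothesis y_SFT : forall k, SFT W (y k).

Lemma lim_measure_SFT : nu (SFT W) = 1%E.
Proof.
apply/eqP; rewrite eq_le probability_le1 /=; last exact: measurable_SFT.
rewrite SFT_bigcap_window.
apply: probability_bigcap_ge.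
- by move=> n; exact (measurable_determined (@determined_SFT_window N L W n)).
- exact: SFT_window_nonincreasing.
move=> n; rewrite /= lim_measureE; last by exists (n + L)%N; exact: determined_SFT_window.
rewrite (lam_all R U_ultra T_gt) // => k i _.
have : SFT W (iter i sh (y k)) by apply/SFT_iter.
by rewrite SFT_bigcap_window => /(_ n I).
Qed.

Variables (A : set (X N)) (ms : nat -> nat) (c : R).
Hypothesis ms_ge : forall k, (k <= ms k)%N.
Hypothesis frequent_visits :
  forall k, c * (T k)%:R <= (visits (Dm (SFT W) A (ms k)) (y k) (T k))%:R.

Lemma lim_measure_boundary_ge : (c%:E <= nu (boundary_in (SFT W) A))%E.
Proof.
have mhull m : measurable (Dm_hull W A m).
  exact (measurable_determined (@determined_Dm_hull N L W A m)).
rewrite boundary_SFT_hull probability_setI_full //; last 3 first.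
- exact: measurable_SFT.
- exact: bigcapT_measurable.
- exact: lim_measure_SFT.
apply: probability_bigcap_ge => //; first exact: Dm_hull_nonincreasing.
move=> m; rewrite /= lim_measureE; last by exists m; exact: determined_Dm_hull.
rewrite lee_fin; apply: (lam_ge U_ultra U_cofinite T_gt); near=> k.
rewrite /freq ler_pdivlMr ?ltr0n ?(T_gt0 T_gt) //; apply: le_trans (frequent_visits k) _.
rewrite ler_nat; apply: visits_subset => x Dx.
suff : Dm (SFT W) A m x by rewrite Dm_SFT_hull => -[].
move: Dx; apply/subsetPset/Dm_nonincreasing; apply: leq_trans (ms_ge k).
by near: k; exact: nbhs_infty_ge.
Unshelve. all: by end_near. Qed.

End LimitMeasureProperties.

Lemma cvg_scaled_elog_null (R : realType) (a : nat -> \bar R) :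
  (\forall n \near \oo, a n = 0%E) ->
  (fun n : nat => (n%:R^-1)%:E * elog (a n))%E @ \oo --> -oo%E.
Proof.
move=> a0; apply: cvg_near_cst; near=> n.
rewrite (near a0 n) // /elog eqxx gt0_muleNy // lte_fin invr_gt0 ltr0n.
by near: n; exact: nbhs_infty_gt.
Unshelve. all: by end_near. Qed.

Section FrequentVisits.
Variables (R : realType) (N : nat) (D : set (X N)) (v : R).
Hypothesis v_gt0 : 0 < v.

Lemma ret_le_visits n x : (0 < n)%N -> ret_le D n v x ->
  exists2 T, (n <= T)%N & (v + 1)^-1 * T%:R <= (visits D x T)%:R.
Proof.
move=> n_gt0 [t [et tv]]; have nv := ret_iter_visits et.
exists t.+1; first exact: leq_trans nv (visits_le _ _ _).
apply: le_trans (_ : n%:R <= _); last by rewrite ler_nat.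
have n1 : 1 <= n%:R :> R by rewrite ler1n.
rewrite ler_pdivrMl -?natr1; [nra|by rewrite ltr_wpDl ?ltW].
Qed.

Hypothesis measurable_D_iter : forall k, measurable [set x | D (iter k (@Defs.shift N) x)].

Lemma frequent_visitor (mu : probability (X N) R) (S : set (X N)) k :
  measurable S -> mu S = 1%E -> ~ (\forall n \near \oo, mu (ret_le D n v) = 0%E) ->
  exists x T, [/\ S x, (k < T)%N & (v + 1)^-1 * T%:R <= (visits D x T)%:R].
Proof.
move=> mS muS not_null.
have [n kn mu_n] : exists2 n, (k < n)%N & mu (ret_le D n v) <> 0%E.
  apply: contrapT => h; apply: not_null; near=> n; apply: contrapT => mu_n.
  by apply: h; exists n => //; near: n; exact: nbhs_infty_gt.
have [x [Sx xle]] : S `&` ret_le D n v !=set0.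
  apply/set0P/negP => /eqP e; apply: mu_n.
  by rewrite -(probability_setI_full mS _ muS) ?e ?measure0 //; exact: measurable_ret_le.
have [T nT visT] := ret_le_visits (leq_ltn_trans (leq0n k) kn) xle.
by exists x, T; split=> //; exact: leq_trans kn nT.
Unshelve. all: by end_near. Qed.

End FrequentVisits.

Lemma invariant_measure_of_frequent_visits (R : realType) (N L : nat)
    (W : pred {ffun 'I_L -> 'I_N.+1}) (A : set (X N)) (c : R)
    (ms : nat -> nat) (y : nat -> X N) (T : nat -> nat) :
  (forall k, [/\ (k <= ms k)%N, SFT W (y k), (k < T k)%N &
     c * (T k)%:R <= (visits (Dm (SFT W) A (ms k)) (y k) (T k))%:R]) ->
  exists P : probability (X N) R,
    [/\ shift_invariant P, P (SFT W) = 1%E & (c%:E <= P (boundary_in (SFT W) A))%E].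
Proof.
move=> h; have [U [U_ultra U_cofinite]] := @ultraFilterLemma nat \oo _.
have T_gt k : (k < T k)%N by case: (h k).
have y_SFT k : SFT W (y k) by case: (h k).
have ms_ge k : (k <= ms k)%N by case: (h k).
have visits_ge k : c * (T k)%:R <= (visits (Dm (SFT W) A (ms k)) (y k) (T k))%:R.
  by case: (h k).
exists (lim_measure R U_ultra U_cofinite y T_gt); split.
- exact: lim_measure_invariant.
- exact: lim_measure_SFT.
- exact: lim_measure_boundary_ge ms_ge visits_ge.
Qed.

Theorem proposition6p2 (R : realType) (N L : nat) (W : pred {ffun 'I_L -> 'I_N.+1})
  (phi : X N -> R) (mu : probability (X N) R) (A : set (X N)) :
  mixing (SFT W) ->
  holder (SFT W) phi ->
  equilibrium_state (SFT W) phi mu ->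
  open_in (SFT W) A ->
  (forall nu : probability (X N) R, shift_invariant nu -> nu (SFT W) = 1%E ->
     nu (boundary_in (SFT W) A) = 0%E) ->
  forall v : R, 0 < v -> exists M : nat, forall m : nat, (M <= m)%N ->
    ((fun n : nat => (n%:R^-1)%:E * elog (mu (ret_le (Dm (SFT W) A m) n v)))%E
       @ \oo --> -oo%E).
Proof.
(* of the properties of [mu] only [mu (SFT W) = 1] is needed *)
move=> _ _ [_ [muS _]] _ boundary_null v v_gt0; apply: contrapT => no_M.
have witness k : exists mxT : nat * X N * nat,
    [/\ (k <= mxT.1.1)%N, SFT W mxT.1.2, (k < mxT.2)%N &
      (v + 1)^-1 * mxT.2%:R <= (visits (Dm (SFT W) A mxT.1.1) mxT.1.2 mxT.2)%:R].
  have [m km not_cvg] : exists2 m, (k <= m)%N &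
      ~ (fun n : nat => (n%:R^-1)%:E * elog (mu (ret_le (Dm (SFT W) A m) n v)))%E
          @ \oo --> -oo%E.
    apply: contrapT => h; apply: no_M; exists k => m km.
    by apply: contrapT => ?; apply: h; exists m.
  have [|x [T [Sx kT visT]]] := frequent_visitor v_gt0 (measurable_Dm_iter W A m) k
    (measurable_SFT W) muS; first by move=> /cvg_scaled_elog_null.
  by exists (m, x, T).
have [f hf] := choice witness.
have [P [P_inv P_SFT]] := invariant_measure_of_frequent_visits hf.
by rewrite boundary_null // lee_fin invr_le0; lra.
Qed.
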